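(* Fix a general instance satisfying the unique-default-action assumption, with default action $a_0$ and margin $\delta_{\mu_0}>0$. 1. The set $S$ is an upper interval of $[0,1]$: if $\beta\in S$ and $\beta\le\beta'\le1$, then $\beta'\in S$. 2. Every $\beta\in S$ satisfies $\beta\ge\delta_{\mu_0}/\sqrt2$. Hence $\alpha_{\min}:=\inf S\ge\delta_{\mu_0}/\sqrt2$ whenever $S\neq\emptyset$. 3. For $\beta\in(0,1]$, if the threshold-test LP at $\beta$ has a feasible solution with strictly positive objective, then its optimal value is at least $\delta_{\mu_0}/\sqrt2$.
   Context: Finite $\Omega$ and $A$, full-support prior $\mu_0\in\Delta(\Omega)$, receiver utility $u_R$, and $\Delta u_{a,a'}(\omega)=u_R(a,\omega)-u_R(a',\omega)$. Unique-default-action assumption: $\arg\max_a\sum_\omega\mu_0(\omega)u_R(a,\omega)=\{a_0\}$. Margin. Let $R_{a_0}^1=\{\nu\in\Delta(\Omega):\Delta u_{a_0,a'}^\top\nu\ge0\ \forall a'\ne a_0\}$. Define $\delta_{\mu_0}=\min\{\mathrm{dist}(\mu_0,\partial R^1_{a_0}),\mathrm{dist}(\mu_0,\partial\Delta(\Omega))\}$, with Euclidean distances and boundaries relative to the affine hull of the simplex. This is positive under the assumptions. The set $S$ consists of all $\beta\in[0,1]$ for which there exist $a\ne a_0$ and $\nu\in\Delta(\Omega)$ with $\Delta u_{a,a_0}^\top\big((1-\beta)\mu_0+\beta\nu\big)=0$. Threshold-test LP at $\beta$: variables $\pi(a\mid\omega)\ge0$ with $\sum_a\pi(a\mid\omega)=1$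 for all $\omega$. Objective: maximize $\sum_{a\ne a_0}\sum_\omega\pi(a\mid\omega)\mu_0(\omega)$. Constraints: - For all $a$ and all $a'\neq a$: $\sum_\omega\pi(a\mid\omega)\mu_0(\omega)\big[\beta\Delta u_{a,a'}(\omega)+(1-\beta)\sum_{\omega'}\mu_0(\omega')\Delta u_{a,a'}(\omega')\big]\ge0$. - For all $a\ne a_0$: the same expression with $a'=a_0$ equals $0$. *)

From HB Require Import structures.
From mathcomp Require Import all_boot all_order all_algebra.
From mathcomp Require Import boolp classical_sets reals constructive_ereal ereal.
Set Implicit Arguments. Unset Strict Implicit. Unset Printing Implicit Defensive.
Import Order.TTheory GRing.Theory Num.Theory.
Local Open Scope classical_set_scope.
Local Open Scope ring_scope.

Section Defs.
Variables (R : realType) (Omega A : finType).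

Definition enorm (x : Omega -> R) : R := Num.sqrt (\sum_w x w ^+ 2).

Definition simplex : set (Omega -> R) :=
  [set nu | (forall w, 0 <= nu w) /\ \sum_w nu w = 1].

Definition affhull : set (Omega -> R) := [set nu | \sum_w nu w = 1].

Definition relbd (C : set (Omega -> R)) : set (Omega -> R) :=
  [set nu | affhull nu /\
     (forall e : R, 0 < e -> exists y, [/\ affhull y, enorm (fun w => y w - nu w) < e & C y]) /\
     (forall e : R, 0 < e -> exists y, [/\ affhull y, enorm (fun w => y w - nu w) < e & ~ C y])].

(* Euclidean distance from a point to a set (+oo for the empty set) *)
Definition dist (x : Omega -> R) (B : set (Omega -> R)) : \bar R :=
  ereal_inf [set (enorm (fun w => x w - y w))%:E | y in B].

Variables (uR : A -> Omega -> R).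

Definition Du (a a' : A) (w : Omega) : R := uR a w - uR a' w.

Definition Rone (a0 : A) : set (Omega -> R) :=
  [set nu | simplex nu /\ forall a', a' != a0 -> 0 <= \sum_w Du a0 a' w * nu w].

Definition margin (mu0 : Omega -> R) (a0 : A) : \bar R :=
  Order.min (dist mu0 (relbd (Rone a0))) (dist mu0 (relbd simplex)).

Definition Sset (mu0 : Omega -> R) (a0 : A) : set R :=
  [set beta | 0 <= beta <= 1 /\
     exists a, a != a0 /\ exists nu, simplex nu /\
       \sum_w Du a a0 w * ((1 - beta) * mu0 w + beta * nu w) = 0].

Definition lp_expr (mu0 : Omega -> R) (beta : R) (pi : A -> Omega -> R) (a a' : A) : R :=
  \sum_w pi a w * mu0 w *
    (beta * Du a a' w + (1 - beta) * \sum_w' mu0 w' * Du a a' w').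

Definition lp_feasible (mu0 : Omega -> R) (a0 : A) (beta : R) (pi : A -> Omega -> R) : Prop :=
  [/\ (forall a w, 0 <= pi a w),
      (forall w, \sum_a pi a w = 1),
      (forall a a', a' != a -> 0 <= lp_expr mu0 beta pi a a') &
      (forall a, a != a0 -> lp_expr mu0 beta pi a a0 = 0)].

Definition lp_obj (mu0 : Omega -> R) (a0 : A) (pi : A -> Omega -> R) : R :=
  \sum_(a | a != a0) \sum_w pi a w * mu0 w.

Definition lp_value (mu0 : Omega -> R) (a0 : A) (beta : R) : R :=
  sup [set lp_obj mu0 a0 pi | pi in lp_feasible mu0 a0 beta].

End Defs.

From HB Require Import structures.
From mathcomp Require Import all_boot all_order all_algebra.
From mathcomp Require Import boolp classical_sets reals constructive_ereal ereal.
From mathcomp Require Import ring lra.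
Set Implicit Arguments.
Unset Strict Implicit.
Unset Printing Implicit Defensive.
Import Order.TTheory GRing.Theory Num.Theory.
Local Open Scope classical_set_scope.
Local Open Scope ring_scope.

(* R^1_{a0} is a polyhedron in the affine hull of the simplex with [mu0] in its
   relative interior, and every relative-boundary point is at distance at least
   [delta] from [mu0].  For [beta] in S with witness [(a, nu)], the mixed belief
   [(1 - beta) mu0 + beta nu] lies on the hyperplane where [a] and [a0] tie, so the
   ray from [mu0] towards [nu] leaves R^1_{a0} before reaching it and
   [delta <= beta |nu - mu0| <= beta sqrt 2].
   A feasible rule of the LP that recommends some [a != a0] induces such a posterior
   [nu], with [|nu - mu0| < sqrt 2], hence [m := delta / sqrt 2 < 1].  Writing
   [mu0 = m nu + (1 - m) r] with [r] beyond [mu0], the margin forces [r] to stay in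
   R^1_{a0}; recommending [a] with posterior [nu] and [a0] with posterior [r] is then
   feasible, with objective [m]. *)

Section Euclid.
Variables (R : realType) (Omega : finType).
Implicit Types (c x y p d : Omega -> R).

Lemma enorm_ge0 x : 0 <= enorm x.
Proof. exact: sqrtr_ge0. Qed.

Lemma enorm0 : enorm (fun _ : Omega => 0 : R) = 0.
Proof. by rewrite /enorm big1 ?sqrtr0 // => w _; rewrite expr0n. Qed.

Lemma enormZ (k : R) x : enorm (fun w => k * x w) = `|k| * enorm x.
Proof.
rewrite /enorm -sqrtr_sqr -sqrtrM ?sqr_ge0 // mulr_sumr.
by congr Num.sqrt; apply: eq_bigr => w _; rewrite exprMn.
Qed.

Lemma simplex_le1 x w : simplex x -> x w <= 1.
Proof.
move=> [x_ge0 <-]; rewrite (bigD1 w) //= lerDl.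
by apply: sumr_ge0 => v _; apply: x_ge0.
Qed.

Lemma simplex_sqdist_le x y : simplex x -> simplex y ->
  \sum_w (x w - y w) ^+ 2 <= 2 - 2 * \sum_w x w * y w.
Proof.
move=> x_simplex y_simplex.
have -> : 2 - 2 * \sum_w x w * y w = \sum_w (x w + y w - 2 * (x w * y w)).
  by rewrite sumrB big_split /= x_simplex.2 y_simplex.2 -mulr_sumr.
apply: ler_sum => w _.
have := x_simplex.1 w; have := y_simplex.1 w.
have := simplex_le1 w x_simplex; have := simplex_le1 w y_simplex.
nra.
Qed.

Lemma enorm_simplex_le x y : simplex x -> simplex y ->
  enorm (fun w => x w - y w) <= Num.sqrt 2.
Proof.
move=> x_simplex y_simplex; apply: ler_wsqrtr.
apply: le_trans (simplex_sqdist_le x_simplex y_simplex) _.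
rewrite gerBl mulr_ge0 // sumr_ge0 // => w _.
by rewrite mulr_ge0 //; [apply: x_simplex.1 | apply: y_simplex.1].
Qed.

Lemma enorm_simplex_lt x y : simplex x -> simplex y -> (forall w, 0 < y w) ->
  enorm (fun w => x w - y w) < Num.sqrt 2.
Proof.
move=> x_simplex y_simplex y_gt0; rewrite /enorm ltr_sqrt //.
apply: le_lt_trans (simplex_sqdist_le x_simplex y_simplex) _.
suff : 0 < \sum_w x w * y w by lra.
have xy_ge0 w : 0 <= x w * y w by rewrite mulr_ge0 //; [apply: x_simplex.1 | apply: ltW].
rewrite lt_def sumr_ge0 // andbT; apply/eqP => /(psumr_eq0P (fun w _ => xy_ge0 w)) xy0.
suff : \sum_w x w = 0 by rewrite x_simplex.2 => /eqP; rewrite oner_eq0.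
apply: big1 => w _; apply/eqP.
by have /eqP := xy0 w isT; rewrite mulf_eq0 (gt_eqF (y_gt0 w)) orbF.
Qed.

Definition dotp x y : R := \sum_w x w * y w.

Lemma dotpD c x y : dotp c (fun w => x w + y w) = dotp c x + dotp c y.
Proof. by rewrite /dotp -big_split; apply: eq_bigr => w _; rewrite mulrDr. Qed.

Lemma dotpZ c (k : R) x : dotp c (fun w => k * x w) = k * dotp c x.
Proof. by rewrite /dotp mulr_sumr; apply: eq_bigr => w _; rewrite mulrCA. Qed.

Lemma dotpB c x y : dotp c (fun w => x w - y w) = dotp c x - dotp c y.
Proof. by rewrite /dotp -sumrB; apply: eq_bigr => w _; rewrite mulrBr. Qed.

Lemma sum_mul_mix c (t : R) x y :
  \sum_w c w * ((1 - t) * x w + t * y w) = (1 - t) * dotp c x + t * dotp c y.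
Proof. by rewrite -!dotpZ -dotpD. Qed.

Lemma dotp_ray c p d (s : R) :
  dotp c (fun w => p w + s * d w) = dotp c p + s * dotp c d.
Proof. by rewrite dotpD dotpZ. Qed.

Lemma dotp_indicator w x : dotp (fun v => (v == w)%:R) x = x w.
Proof.
rewrite /dotp (bigD1 w) //= eqxx mul1r big1 ?addr0 // => v /negbTE ->.
by rewrite mul0r.
Qed.

Lemma affhull_ray p d (s : R) : affhull p -> \sum_w d w = 0 ->
  affhull (fun w => p w + s * d w).
Proof. by rewrite /affhull /= big_split /= -mulr_sumr => -> ->; rewrite mulr0 addr0. Qed.

End Euclid.

Section Polyhedron.
Variables (R : realType) (Omega I : finType) (c : I -> Omega -> R).

Definition polyhedron : set (Omega -> R) :=
  [set x | affhull x /\ forall i, 0 <= dotp (c i) x].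

(* The ray leaves the polyhedron at the first constraint it saturates. *)
Lemma polyhedron_ray_exit p d i0 :
  affhull p -> (forall i, 0 < dotp (c i) p) -> \sum_w d w = 0 ->
  dotp (c i0) d < 0 ->
  exists2 s, 0 < s <= dotp (c i0) p / - dotp (c i0) d &
    polyhedron (fun w => p w + s * d w) /\ relbd polyhedron (fun w => p w + s * d w).
Proof.
move=> p_aff p_int d_sum i0_out.
pose hit i := dotp (c i) p / - dotp (c i) d.
have [i i_out hit_min] := @arg_minP _ R _ i0 (fun i => dotp (c i) d < 0) hit i0_out.
have hit_gt0 : 0 < hit i by rewrite divr_gt0 ?p_int // oppr_gt0.
have hit_root : dotp (c i) p + hit i * dotp (c i) d = 0.
  by rewrite /hit; field; rewrite lt_eqF.
have exit_in : polyhedron (fun w => p w + hit i * d w).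
  split=> [|j]; first exact: affhull_ray.
  rewrite dotp_ray; have := p_int j.
  have [dj_ge0 pj_gt0|dj_lt0] := leP 0 (dotp (c j) d).
    by apply: addr_ge0; [exact: ltW | exact: mulr_ge0 (ltW hit_gt0) dj_ge0].
  by have := hit_min j dj_lt0; rewrite /hit ler_pdivlMr ?oppr_gt0 //; lra.
exists (hit i); first by rewrite hit_gt0 hit_min.
split=> //; split; first exact: affhull_ray.
split=> e e_gt0.
  exists (fun w => p w + hit i * d w); split=> //; first exact: affhull_ray.
  by under eq_fun do rewrite subrr; rewrite enorm0.
have d_ge0 := enorm_ge0 d.
pose eps := e / (enorm d + 1).
have eps_gt0 : 0 < eps by rewrite divr_gt0 // ltr_wpDl.
exists (fun w => p w + (hit i + eps) * d w); split.
- exact: affhull_ray.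
- under eq_fun do rewrite mulrDl addrA addrC addrK.
  rewrite enormZ gtr0_norm // /eps mulrAC ltr_pdivrMr ?ltr_wpDl //.
  by rewrite ltr_pM2l //; lra.
- move=> [_ /(_ i)]; rewrite dotp_ray mulrDl addrA hit_root add0r.
  by rewrite leNgt pmulr_rlt0 // i_out.
Qed.

End Polyhedron.

Lemma lee_EFin_inf (R : realType) (e : \bar R) (S : set R) : S !=set0 ->
  (forall x, S x -> (e <= x%:E)%E) -> (e <= (inf S)%:E)%E.
Proof.
move=> [x Sx]; case: e => [e| |] e_le //; last by rewrite leNye.
  by rewrite lee_fin; apply: lb_le_inf; [exists x | move=> y /e_le; rewrite lee_fin].
by have := e_le x Sx.
Qed.

Section Persuasion.
Variables (R : realType) (Omega A : finType)
  (mu0 : Omega -> R) (uR : A -> Omega -> R) (a0 : A).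
Hypotheses (mu0_gt0 : forall w, 0 < mu0 w) (mu0_sum : \sum_w mu0 w = 1)
  (a0_default : forall a, a != a0 ->
     \sum_w mu0 w * uR a w < \sum_w mu0 w * uR a0 w).

Local Notation delta := (margin uR mu0 a0).
Local Notation Du := (Du uR).

Lemma simplex_mu0 : simplex mu0.
Proof. by split=> // w; apply: ltW. Qed.

Lemma dotp_DuC a a' x : dotp (Du a a') x = - dotp (Du a' a) x.
Proof. by rewrite /dotp -sumrN; apply: eq_bigr => w _; rewrite /Du; ring. Qed.

Lemma dotp_Du_mu0_gt0 a : a != a0 -> 0 < dotp (Du a0 a) mu0.
Proof.
move=> a_neq; have := a0_default a_neq.
rewrite /dotp /Du -subr_gt0 -sumrB; under eq_bigr do rewrite -mulrBr mulrC.
by [].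
Qed.

Definition Rone_coef (i : Omega + {a | a != a0}) : Omega -> R :=
  match i with
  | inl w => fun v => (v == w)%:R
  | inr a => Du a0 (val a)
  end.

Lemma Rone_polyhedron : Rone uR a0 = polyhedron Rone_coef.
Proof.
apply/seteqP; split=> x /=.
  move=> [[x_ge0 x_sum] x_obed]; split=> // -[w|[a a_neq]] /=.
    by rewrite dotp_indicator.
  exact: x_obed.
move=> [x_sum x_cons]; split.
  by split=> // w; have := x_cons (inl w); rewrite /= dotp_indicator.
by move=> a a_neq; apply: (x_cons (inr (exist _ a a_neq))).
Qed.

Lemma Rone_coef_mu0_gt0 i : 0 < dotp (Rone_coef i) mu0.
Proof. by case: i => [w|[a a_neq]] /=; rewrite ?dotp_indicator ?dotp_Du_mu0_gt0. Qed.

Lemma margin_le_relbd p : relbd (Rone uR a0) p ->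
  (delta <= (enorm (fun w => mu0 w - p w))%:E)%E.
Proof.
move=> p_bd; rewrite /margin ge_min; apply/orP; left.
by apply: ge_ereal_inf; exists (enorm (fun w => mu0 w - p w))%:E => //; exists p.
Qed.

Lemma Rone_ray_exit d i : \sum_w d w = 0 -> dotp (Rone_coef i) d < 0 ->
  exists2 s, 0 < s <= dotp (Rone_coef i) mu0 / - dotp (Rone_coef i) d &
    Rone uR a0 (fun w => mu0 w + s * d w) /\ (delta <= (s * enorm d)%:E)%E.
Proof.
move=> d_sum i_out; rewrite Rone_polyhedron.
have [s s_range [e_in e_bd]] := polyhedron_ray_exit simplex_mu0.2 Rone_coef_mu0_gt0 d_sum i_out.
exists s => //; split=> //.
rewrite -Rone_polyhedron in e_bd; apply: le_trans (margin_le_relbd e_bd) _.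
under eq_fun do rewrite opprD addrA subrr add0r -mulNr.
by rewrite enormZ normrN gtr0_norm //; case/andP: s_range.
Qed.

Lemma indifference_beta_gt0 beta a nu : 0 <= beta -> a != a0 ->
  (1 - beta) * dotp (Du a a0) mu0 + beta * dotp (Du a a0) nu = 0 -> 0 < beta.
Proof.
move=> beta_ge0 a_neq indiff; rewrite lt_def beta_ge0 andbT.
apply/eqP => beta0; move: indiff; rewrite beta0 subr0 mul1r mul0r addr0.
by rewrite dotp_DuC => /eqP; rewrite oppr_eq0 gt_eqF // dotp_Du_mu0_gt0.
Qed.

(* The mixed belief lies on the hyperplane of R^1_{a0} where [a] and [a0] tie. *)
Lemma margin_le_indifference beta a nu : 0 < beta -> a != a0 -> \sum_w nu w = 1 ->
  (1 - beta) * dotp (Du a a0) mu0 + beta * dotp (Du a a0) nu = 0 ->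
  (delta <= (beta * enorm (fun w => nu w - mu0 w))%:E)%E.
Proof.
move=> beta_gt0 a_neq nu_sum indiff.
pose i : Omega + {a | a != a0} := inr (exist _ a a_neq).
set d := fun w => nu w - mu0 w.
have d_sum : \sum_w d w = 0 by rewrite sumrB nu_sum mu0_sum subrr.
have tie : dotp (Rone_coef i) mu0 + beta * dotp (Rone_coef i) d = 0.
  rewrite /= dotpB !(dotp_DuC a0 a) -oppr0 -indiff; ring.
have mu0_in := Rone_coef_mu0_gt0 i.
have d_lt0 : dotp (Rone_coef i) d < 0 by rewrite -(pmulr_rlt0 _ beta_gt0); lra.
have [s /andP[s_gt0 s_le] [_ delta_le]] := Rone_ray_exit d_sum d_lt0.
apply: le_trans delta_le _; rewrite lee_fin ler_wpM2r ?enorm_ge0 //.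
apply: le_trans s_le _; rewrite ler_pdivrMr ?oppr_gt0 //; lra.
Qed.

Lemma Sset_upper beta beta' : Sset uR mu0 a0 beta -> beta <= beta' <= 1 ->
  Sset uR mu0 a0 beta'.
Proof.
move=> [/andP[beta_ge0 _] [a [a_neq [nu [nu_simplex]]]]].
rewrite sum_mul_mix => indiff /andP[le_beta' beta'_le1].
have beta_gt0 := indifference_beta_gt0 beta_ge0 a_neq indiff.
have beta'_gt0 : 0 < beta' := lt_le_trans beta_gt0 le_beta'.
have beta'_neq0 : beta' != 0 by rewrite gt_eqF.
(* [(1 - beta') mu0 + beta' nu'] is the same mixed belief as before *)
pose nu' w := beta'^-1 * ((beta' - beta) * mu0 w + beta * nu w).
split; first by rewrite ltW.
exists a; split=> //; exists nu'; split; last first.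
  by rewrite sum_mul_mix /nu' dotpZ dotpD !dotpZ -indiff; field.
split=> [w|].
  have := nu_simplex.1 w; have := mu0_gt0 w; rewrite /nu'.
  by move=> *; apply: mulr_ge0; [rewrite invr_ge0 ltW | nra].
by rewrite -mulr_sumr big_split /= -!mulr_sumr mu0_sum nu_simplex.2; field.
Qed.

Lemma Sset_margin_le beta : Sset uR mu0 a0 beta ->
  (delta <= (beta * Num.sqrt 2)%:E)%E.
Proof.
move=> [/andP[beta_ge0 _] [a [a_neq [nu [nu_simplex]]]]].
rewrite sum_mul_mix => indiff.
have beta_gt0 := indifference_beta_gt0 beta_ge0 a_neq indiff.
apply: le_trans (margin_le_indifference beta_gt0 a_neq nu_simplex.2 indiff) _.
rewrite lee_fin ler_wpM2l ?(ltW beta_gt0) //.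
exact: enorm_simplex_le nu_simplex simplex_mu0.
Qed.

(* Pushing [mu0] away from [nu] by the ratio [m / (1 - m)] stays inside R^1_{a0}:
   a boundary point reached earlier would be closer than [delta] to [mu0] while still
   within [Num.sqrt 2] of [nu]. *)
Lemma Rone_opposite nu m : simplex nu -> 0 < m < 1 ->
  ((m * Num.sqrt 2)%:E <= delta)%E ->
  Rone uR a0 (fun w => mu0 w + m / (1 - m) * (mu0 w - nu w)).
Proof.
move=> nu_simplex /andP[m_gt0 m_lt1] m_le_delta.
set t := m / (1 - m); set d := fun w => mu0 w - nu w.
have t_gt0 : 0 < t by rewrite divr_gt0 // subr_gt0.
have d_sum : \sum_w d w = 0 by rewrite sumrB mu0_sum nu_simplex.2 subrr.
rewrite Rone_polyhedron; split=> [|i]; first exact: affhull_ray.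
rewrite dotp_ray leNgt; apply/negP => r_out.
have mu0_in := Rone_coef_mu0_gt0 i.
have d_out : dotp (Rone_coef i) d < 0 by rewrite -(pmulr_rlt0 _ t_gt0); lra.
have [s /andP[s_gt0 s_le] [e_in delta_le]] := Rone_ray_exit d_sum d_out.
have s_lt_t : s < t.
  by apply: le_lt_trans s_le _; rewrite ltr_pdivrMr ?oppr_gt0 //; lra.
have e_far : (1 + s) * enorm d <= Num.sqrt 2.
  have := enorm_simplex_le e_in.1 nu_simplex.
  have -> : (fun w => mu0 w + s * d w - nu w) = (fun w => (1 + s) * d w).
    by apply/funext => w; rewrite /d; ring.
  by rewrite enormZ gtr0_norm // addr_gt0.
have m_le : m * Num.sqrt 2 <= s * enorm d by rewrite -lee_fin (le_trans m_le_delta).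
have s_small : s * (1 - m) < m by rewrite -ltr_pdivlMr // subr_gt0.
have d_small : enorm d * (m - s * (1 - m)) <= 0 by nra.
have gap : 0 < m - s * (1 - m) by rewrite subr_gt0.
have d0 : enorm d <= 0 by nra.
have sqrt2_gt0 : 0 < Num.sqrt (2 : R) by rewrite sqrtr_gt0.
nra.
Qed.

Lemma lp_exprE beta pi b b' (k : R) nu :
  (forall w, pi b w * mu0 w = k * nu w) -> \sum_w nu w = 1 ->
  lp_expr uR mu0 beta pi b b' =
    k * ((1 - beta) * dotp (Du b b') mu0 + beta * dotp (Du b b') nu).
Proof.
move=> pi_nu nu_sum; rewrite /lp_expr.
have -> : \sum_w mu0 w * Du b b' w = dotp (Du b b') mu0.
  by apply: eq_bigr => w _; rewrite mulrC.
under eq_bigr do rewrite pi_nu.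
transitivity (\sum_w (k * beta * (Du b b' w * nu w)
                      + k * (1 - beta) * dotp (Du b b') mu0 * nu w)).
  by apply: eq_bigr => w _; ring.
by rewrite big_split /= -!mulr_sumr nu_sum /dotp; ring.
Qed.

Lemma lp_obj_le1 beta pi : lp_feasible uR mu0 a0 beta pi -> lp_obj mu0 a0 pi <= 1.
Proof.
move=> [pi_ge0 pi_sum _ _].
have -> : 1 = \sum_b \sum_w pi b w * mu0 w.
  rewrite exchange_big /= -mu0_sum; apply: eq_bigr => w _.
  by rewrite -mulr_suml pi_sum mul1r.
rewrite /lp_obj [leRHS](bigID (fun b => b != a0)) /= lerDl.
by apply: sumr_ge0 => b _; apply: sumr_ge0 => w _; rewrite mulr_ge0 ?pi_ge0 // ltW.
Qed.

Lemma lp_obj_le_value beta pi : lp_feasible uR mu0 a0 beta pi ->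
  lp_obj mu0 a0 pi <= lp_value uR mu0 a0 beta.
Proof.
move=> pi_feas; apply: ub_le_sup; last by exists pi.
by exists 1 => _ [pi' pi'_feas <-]; apply: lp_obj_le1 pi'_feas.
Qed.

Lemma lp_obj_gt0_mass pi : 0 < lp_obj mu0 a0 pi ->
  exists2 a, a != a0 & 0 < \sum_w pi a w * mu0 w.
Proof.
move=> obj_gt0; apply: contrapT => no_mass; move: obj_gt0.
rewrite ltNge => /negP; apply; apply: sumr_le0 => a a_neq.
by rewrite leNgt; apply/negP => mass_gt0; apply: no_mass; exists a.
Qed.

(* The receiver is recommended [a] with posterior [nu] (probability [m]) and [a0]
   with posterior [r] (probability [1 - m]). *)
Lemma lp_two_signals beta a nu r m : 0 <= beta <= 1 -> a != a0 -> 0 <= m <= 1 ->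
  simplex nu -> Rone uR a0 r -> (forall w, m * nu w + (1 - m) * r w = mu0 w) ->
  (forall b, b != a -> 0 <= (1 - beta) * dotp (Du a b) mu0 + beta * dotp (Du a b) nu) ->
  (1 - beta) * dotp (Du a a0) mu0 + beta * dotp (Du a a0) nu = 0 ->
  exists2 pi, lp_feasible uR mu0 a0 beta pi & lp_obj mu0 a0 pi = m.
Proof.
move=> /andP[beta_ge0 beta_le1] a_neq /andP[m_ge0 m_le1] nu_simplex r_in mu0_split obed indiff.
have [r_simplex r_obed] := r_in.
pose q b w := if b == a then m * nu w else if b == a0 then (1 - m) * r w else 0.
pose pi b w := q b w / mu0 w.
have pi_mu0 b w : pi b w * mu0 w = q b w by rewrite divfK // gt_eqF.
have q_other b w : b != a -> b != a0 -> q b w = 0.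
  by rewrite /q => /negbTE -> /negbTE ->.
have expr_a b' : lp_expr uR mu0 beta pi a b' =
    m * ((1 - beta) * dotp (Du a b') mu0 + beta * dotp (Du a b') nu).
  by apply: lp_exprE nu_simplex.2 => w; rewrite pi_mu0 /q eqxx.
have expr_a0 b' : lp_expr uR mu0 beta pi a0 b' =
    (1 - m) * ((1 - beta) * dotp (Du a0 b') mu0 + beta * dotp (Du a0 b') r).
  by apply: lp_exprE r_simplex.2 => w; rewrite pi_mu0 /q eq_sym (negbTE a_neq) eqxx.
have expr_other b b' : b != a -> b != a0 -> lp_expr uR mu0 beta pi b b' = 0.
  move=> b_a b_a0; rewrite (@lp_exprE _ _ _ _ 0 mu0) ?mul0r // => w.
  by rewrite pi_mu0 q_other // mul0r.
exists pi; last first.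
  rewrite /lp_obj (bigD1 a) //= [X in _ + X]big1 ?addr0; last first.
    by move=> b /andP[b_a0 b_a]; apply: big1 => w _; rewrite pi_mu0 q_other.
  by under eq_bigr do rewrite pi_mu0 /q eqxx; rewrite -mulr_sumr nu_simplex.2 mulr1.
split.
- move=> b w; rewrite divr_ge0 ?(ltW (mu0_gt0 w)) // /q.
  case: ifP => _; first by rewrite mulr_ge0 // nu_simplex.1.
  by case: ifP => _ //; rewrite mulr_ge0 ?subr_ge0 // r_simplex.1.
- move=> w; apply: (@mulIf _ (mu0 w)); first by rewrite gt_eqF.
  rewrite mul1r mulr_suml (bigD1 a) //= (bigD1 a0) /=; last by rewrite eq_sym.
  rewrite big1; last by move=> b /andP[b_a b_a0]; rewrite pi_mu0 q_other.
  by rewrite !pi_mu0 /q eqxx eq_sym (negbTE a_neq) eqxx addr0 mu0_split.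
- move=> b b'; have [-> b'_a|b_a] := eqVneq b a.
    by rewrite expr_a mulr_ge0 // obed.
  have [-> b'_a0|b_a0 _] := eqVneq b a0; last by rewrite expr_other.
  rewrite expr_a0 mulr_ge0 ?subr_ge0 // addr_ge0 // mulr_ge0 ?subr_ge0 //.
    by rewrite ltW // dotp_Du_mu0_gt0.
  exact: r_obed.
- move=> b b_a0; have [->|b_a] := eqVneq b a; last by rewrite expr_other.
  by rewrite expr_a indiff mulr0.
Qed.

Lemma lp_value_ge_margin beta pi : 0 < beta <= 1 -> (0 < delta)%E ->
  lp_feasible uR mu0 a0 beta pi -> 0 < lp_obj mu0 a0 pi ->
  (delta <= (lp_value uR mu0 a0 beta * Num.sqrt 2)%:E)%E.
Proof.
move=> /andP[beta_gt0 beta_le1] delta_gt0 pi_feas obj_gt0.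
have [pi_ge0 _ pi_obed pi_indiff] := pi_feas.
have [a a_neq mass_gt0] := lp_obj_gt0_mass obj_gt0.
set mass := \sum_w pi a w * mu0 w in mass_gt0.
pose nu w := pi a w * mu0 w / mass.
have nu_simplex : simplex nu.
  split=> [w|]; first by rewrite divr_ge0 ?mulr_ge0 ?pi_ge0 // ltW.
  by rewrite -mulr_suml divff // gt_eqF.
have expr_a b' : lp_expr uR mu0 beta pi a b' =
    mass * ((1 - beta) * dotp (Du a b') mu0 + beta * dotp (Du a b') nu).
  by apply: lp_exprE nu_simplex.2 => w; rewrite /nu [RHS]mulrC divfK // gt_eqF.
have indiff : (1 - beta) * dotp (Du a a0) mu0 + beta * dotp (Du a a0) nu = 0.
  by have /eqP := pi_indiff a a_neq; rewrite expr_a mulf_eq0 gt_eqF //= => /eqP.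
have obed b : b != a -> 0 <= (1 - beta) * dotp (Du a b) mu0 + beta * dotp (Du a b) nu.
  by move=> b_a; have := pi_obed a b b_a; rewrite expr_a pmulr_rge0.
have delta_le := margin_le_indifference beta_gt0 a_neq nu_simplex.2 indiff.
have nu_far := enorm_simplex_lt nu_simplex simplex_mu0 mu0_gt0.
have sqrt2_gt0 : 0 < Num.sqrt (2 : R) by rewrite sqrtr_gt0.
case E : delta delta_gt0 delta_le => [dl| |] //; rewrite lte_fin lee_fin => dl_gt0 dl_le.
pose m := dl / Num.sqrt 2.
have m_gt0 : 0 < m by rewrite divr_gt0.
have m_lt1 : m < 1.
  rewrite ltr_pdivrMr // mul1r; apply: le_lt_trans dl_le _.
  have := enorm_ge0 (fun w => nu w - mu0 w); nra.
have m_le_delta : ((m * Num.sqrt 2)%:E <= delta)%E by rewrite E /m divfK ?gt_eqF.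
have r_in := Rone_opposite nu_simplex (introT andP (conj m_gt0 m_lt1)) m_le_delta.
have mu0_split w : m * nu w + (1 - m) * (mu0 w + m / (1 - m) * (mu0 w - nu w)) = mu0 w.
  by field; rewrite subr_eq0 eq_sym lt_eqF.
have beta_range : 0 <= beta <= 1 by rewrite ltW.
have m_range : 0 <= m <= 1 by rewrite !ltW.
have [pi' pi'_feas obj_m] :=
  lp_two_signals beta_range a_neq m_range nu_simplex r_in mu0_split obed indiff.
by rewrite lee_fin -ler_pdivrMr // -/m -obj_m lp_obj_le_value.
Qed.

End Persuasion.

Theorem propositionC1 (R : realType) (Omega A : finType)
  (mu0 : Omega -> R) (uR : A -> Omega -> R) (a0 : A)
  (hmu_pos : forall w, 0 < mu0 w) (hmu_sum : \sum_w mu0 w = 1)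
  (hdefault : forall a, a != a0 ->
     \sum_w mu0 w * uR a w < \sum_w mu0 w * uR a0 w)
  (hmargin : (0 < margin uR mu0 a0)%E) :
  let delta := margin uR mu0 a0 in
  let S := Sset uR mu0 a0 in
  (* 1. S is an upper interval of [0,1] *)
  (forall beta beta', S beta -> beta <= beta' <= 1 -> S beta') /\
  (* 2. lower bound delta / sqrt 2 on S and on its infimum *)
  (forall beta, S beta -> (delta * ((Num.sqrt 2)^-1)%:E <= beta%:E)%E) /\
  (S !=set0 -> (delta * ((Num.sqrt 2)^-1)%:E <= (inf S)%:E)%E) /\
  (* 3. LP optimal value bound *)
  (forall beta, 0 < beta <= 1 ->
     (exists pi, lp_feasible uR mu0 a0 beta pi /\ 0 < lp_obj mu0 a0 pi) ->
     (delta * ((Num.sqrt 2)^-1)%:E <= (lp_value uR mu0 a0 beta)%:E)%E).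
Proof.
move=> delta S.
have sqrt2_gt0 : 0 < Num.sqrt (2 : R) by rewrite sqrtr_gt0.
have S_ge beta : S beta -> (delta * ((Num.sqrt 2)^-1)%:E <= beta%:E)%E.
  by rewrite lee_pdivrMr //; apply: Sset_margin_le.
split; [exact: Sset_upper | split; [exact: S_ge | split]].
  by move=> S_nonempty; apply: lee_EFin_inf.
move=> beta beta_range [pi [pi_feas obj_gt0]].
by rewrite lee_pdivrMr //; apply: lp_value_ge_margin pi_feas obj_gt0.
Qed.
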